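(* For $p$ an odd prime, $H(p-1)\equiv (-1)^{\frac{p-1}{2}}\,(p-1)!! \pmod p$.
   Context: For a natural number $n$, the double factorial $n!!$ is the product of the natural numbers less than or equal to $n$ that have the same parity as $n$. The hyperfactorial is $H(n)=\prod_{k=1}^{n} k^k$. *)

From mathcomp Require Import all_boot all_order all_algebra.
Set Implicit Arguments. Unset Strict Implicit. Unset Printing Implicit Defensive.

Fixpoint dfact (n : nat) : nat :=
  match n with
  | 0 => 1
  | 1 => 1
  | (m.+2) as k => k * dfact m
  end.

Definition hyperfact (n : nat) : nat := \prod_(1 <= k < n.+1) k ^ k.

From mathcomp Require Import all_boot all_order all_algebra.
From mathcomp Require Import finfield zify.
Import GRing.Theory Num.Theory.
Local Open Scope ring_scope.

(* Write p = 2m + 1 and pair the factor k^k of H(p-1), k odd, with the factor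
   (p-k)^(p-k).  Modulo p we have k = -(p-k) and k is odd, so the pair equals
   -(p-k)^p = -(p-k) by Fermat.  The m pairs thus contribute the sign (-1)^m
   times the product of the even numbers p-k, which is (p-1)!!. *)

Lemma big_nat_double_pairs (R : Type) (idx : R) (op : Monoid.law idx)
    (F : nat -> R) (m : nat) :
  \big[op/idx]_(1 <= k < m.*2.+1) F k =
  \big[op/idx]_(0 <= j < m) op (F j.*2.+1) (F j.*2.+2).
Proof.
elim: m => [|m IHm]; first by rewrite !big_geq.
rewrite doubleS big_nat_recr //= big_nat_recr //= IHm.
by rewrite big_nat_recr //= Monoid.mulmA.
Qed.

Lemma dfact_double (m : nat) : dfact m.*2 = (\prod_(0 <= j < m) j.*2.+2)%N.
Proof.
elim: m => [|m IHm]; first by rewrite big_geq.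
by rewrite doubleS /= IHm big_nat_recr //= mulnC.
Qed.

Lemma Fp_pow_self_compl (p : nat) (p_pr : prime p) (a b : nat) :
  (a + b)%N = p -> odd a -> (a%:R : 'F_p) ^+ a * b%:R ^+ b = - b%:R.
Proof.
move=> ab_p odd_a; subst p.
have a_eq : (a%:R : 'F_(a + b)) = - b%:R.
  by apply/eqP; rewrite -addr_eq0 -natrD (pchar_Fp_0 p_pr).
have fermat := expf_card (b%:R : 'F_(a + b)); rewrite card_Fp // in fermat.
by rewrite a_eq exprNn -signr_odd odd_a expr1 mulN1r mulNr -exprD fermat.
Qed.

Lemma hyperfact_double_Fp (m : nat) : prime m.*2.+1 ->
  ((hyperfact m.*2)%:R : 'F_(m.*2.+1)) = (-1) ^+ m * (dfact m.*2)%:R.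
Proof.
move=> p_pr; set F := fun k => ((k ^ k)%N%:R : 'F_(m.*2.+1)).
have reindex : \prod_(0 <= j < m) (F j.*2.+1 * F j.*2.+2) =
               \prod_(0 <= j < m) (F (m - j.+1).*2.+1 * F j.*2.+2).
  by rewrite big_split [in RHS]big_split /= big_nat_rev /= add0n.
rewrite /hyperfact natr_prod big_nat_double_pairs reindex dfact_double natr_prod.
transitivity (\prod_(0 <= j < m) (-1 * (j.*2.+2)%:R : 'F_(m.*2.+1)));
  last by rewrite big_split /= prodr_const_nat subn0.
apply: eq_big_nat => j /andP [_ lt_jm].
rewrite /F !natrX (@Fp_pow_self_compl _ p_pr) ?mulN1r //=; last by rewrite odd_double.
by rewrite -!muln2; lia.
Qed.

Theorem theorem11 (p : nat) (hp : prime p) (hodd : odd p) :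
  ((hyperfact p.-1)%:Z = (-1) ^+ (p.-1)./2 * (dfact p.-1)%:Z %[mod p%:Z])%Z.
Proof.
have p_eq : p = (p./2).*2.+1 by rewrite -[LHS]odd_double_half hodd.
have -> : (p.-1)./2 = p./2 by rewrite {1}p_eq /= doubleK.
have -> : p.-1 = (p./2).*2 by rewrite {1}p_eq.
move: (p./2) p_eq => m ->{p hodd} in hp *.
apply/eqP; rewrite eqz_mod_dvd (dvdz_pcharf (pchar_Fp hp)).
rewrite rmorphB rmorphM /= rmorph_sign subr_eq0.
exact/eqP/hyperfact_double_Fp.
Qed.
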